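(* Let $\mathcal{X}\subseteq\mathbb{R}^d$ be nonempty, closed and convex, and let $f:\mathbb{R}^d\to\mathbb{R}$ be differentiable (not necessarily convex) and $L$-smooth on an open set containing $\mathcal{X}$; assume $f_\star=\min_{x\in\mathcal{X}}f(x)$ is attained. Fix $\gamma\in(0,1/L]$ and define $G_\gamma(x):=\frac1\gamma\big(x-\Pi_{\mathcal{X}}(x-\gamma\nabla f(x))\big)$, where $\Pi_{\mathcal{X}}$ is the Euclidean projection onto $\mathcal{X}$. Let $x_0\in\mathcal{X}$ and $x_{k+1}\in\operatorname{arg\,min}_{z\in\mathcal{X}\cap\mathcal{B}(x_k,t_k)}\langle\nabla f(x_k),z\rangle$ with $t_k:=\gamma\|G_\gamma(x_k)\|$. Then for every $k\ge0$, $f(x_{k+1})\le f(x_k)-\frac\gamma2\|G_\gamma(x_k)\|^2$, and for every $K\ge1$, $$\min_{0\le k\le K-1}\|G_\gamma(x_k)\|^2\le\frac{2(f(x_0)-f_\star)}{\gamma K}.$$ In particular, for $\gamma=1/L$, $\min_{0\le k\le K-1}\|G_{1/L}(x_k)\|^2\le\frac{2L(f(x_0)-f_\star)}{K}$.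
   Context: $\|\cdot\|$ is the Euclidean norm, $\mathcal{B}(x,t):=\{y:\|y-x\|\le t\}$; $L$-smooth means $\nabla f$ is $L$-Lipschitz. *)

From HB Require Import structures.
From mathcomp Require Import all_boot all_order all_algebra.
From mathcomp Require Import all_classical all_reals all_analysis.
Set Implicit Arguments. Unset Strict Implicit. Unset Printing Implicit Defensive.
Import Order.TTheory GRing.Theory Num.Theory.
Import numFieldNormedType.Exports.
Local Open Scope classical_set_scope.
Local Open Scope ring_scope.

Section Defs.
Variables (R : realType) (d : nat).
Notation V := 'rV[R]_d.

Definition dotp (u v : V) : R := \sum_(i < d) u ord0 i * v ord0 i.
Definition enorm (u : V) : R := Num.sqrt (dotp u u).

Definition eball (x : V) (t : R) : set V := [set y | enorm (y - x) <= t].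

Definition is_proj (X : set V) (y p : V) : Prop :=
  X p /\ forall z, X z -> enorm (y - p) <= enorm (y - z).

Definition is_gradient (f : V -> R) (x g : V) : Prop :=
  differentiable f x /\ forall v : V, 'd f x v = dotp g v.

Definition grad_map (P : V -> V) (grad : V -> V) (gamma : R) (x : V) : V :=
  gamma^-1 *: (x - P (x - gamma *: grad x)).

Definition is_argmin_lin (S : set V) (g z : V) : Prop :=
  S z /\ forall w, S w -> dotp g z <= dotp g w.
End Defs.

From HB Require Import structures.
From mathcomp Require Import all_boot all_order all_algebra.
From mathcomp Require Import all_classical all_reals all_analysis.
From mathcomp Require Import ring lra.
Import Order.TTheory GRing.Theory Num.Theory.
Import numFieldNormedType.Exports.
Local Open Scope classical_set_scope.
Local Open Scope ring_scope.
Set Implicit Arguments. Unset Strict Implicit.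

(* Write [g = grad f x_k], [p = Pi_X(x_k - gamma g)] and [u = x_k - p = gamma G_gamma(x_k)].
   The projection inequality at the feasible point [x_k] gives
   [gamma <g, p - x_k> <= -|u|^2]; since [p] lies in the ball of radius [t_k = |u|],
   the minimizer [x_{k+1}] of [<g, .>] does at least as well, and [|x_{k+1} - x_k| <= |u|].
   The descent lemma of [L]-smooth functions with [L <= 1/gamma] then yields
   [f(x_{k+1}) <= f(x_k) - |u|^2/gamma + |u|^2/(2 gamma)], i.e. the sufficient decrease.
   Summing the decreases and bounding [f(x_K)] below by [f_star] gives the rate. *)

Section InnerProduct.
Variables (R : realType) (d : nat).
Notation V := 'rV[R]_d.
Implicit Types u v w : V.

Lemma dotpC u v : dotp u v = dotp v u.
Proof. by apply: eq_bigr => i _; rewrite mulrC. Qed.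

Lemma dotpDl u v w : dotp (u + v) w = dotp u w + dotp v w.
Proof. by rewrite /dotp -big_split; apply: eq_bigr => i _; rewrite mxE mulrDl. Qed.

Lemma dotpZl (c : R) u v : dotp (c *: u) v = c * dotp u v.
Proof. by rewrite /dotp mulr_sumr; apply: eq_bigr => i _; rewrite mxE mulrA. Qed.

Lemma dotpBl u v w : dotp (u - v) w = dotp u w - dotp v w.
Proof. by rewrite dotpDl -scaleN1r dotpZl mulN1r. Qed.

Lemma dotpZr (c : R) u v : dotp u (c *: v) = c * dotp u v.
Proof. by rewrite dotpC dotpZl dotpC. Qed.

Lemma dotpBr u v w : dotp u (v - w) = dotp u v - dotp u w.
Proof. by rewrite dotpC dotpBl !(dotpC u). Qed.

Lemma dotpp_ge0 u : 0 <= dotp u u.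
Proof. by apply: sumr_ge0 => i _; rewrite sqr_ge0. Qed.

Lemma enorm_sqr u : enorm u ^+ 2 = dotp u u.
Proof. by rewrite sqr_sqrtr // dotpp_ge0. Qed.

Lemma ler_enorm u v : (enorm u <= enorm v) = (dotp u u <= dotp v v).
Proof. by rewrite ler_sqrt // dotpp_ge0. Qed.

Lemma enormZ (c : R) u : enorm (c *: u) = `|c| * enorm u.
Proof. by rewrite /enorm dotpZl dotpZr mulrA -expr2 sqrtrM ?sqr_ge0 // sqrtr_sqr. Qed.

Lemma enorm_distC u v : enorm (u - v) = enorm (v - u).
Proof. by rewrite -opprB -scaleN1r enormZ normrN1 mul1r. Qed.

Lemma dotpp_BZ u v (s : R) :
  dotp (u - s *: v) (u - s *: v) = dotp u u - 2 * s * dotp u v + s ^+ 2 * dotp v v.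
Proof. by rewrite !dotpBl !dotpBr !dotpZl !dotpZr (dotpC v u); ring. Qed.

Lemma dotp_amgm (a : R) u v : 2 * a * dotp u v <= dotp u u + a ^+ 2 * dotp v v.
Proof. by have := dotpp_ge0 (u - a *: v); rewrite dotpp_BZ; lra. Qed.

Lemma dotp_le_of_enorm_le (a : R) w v :
  0 < a -> enorm w <= a * enorm v -> dotp w v <= a * dotp v v.
Proof.
move=> a_gt0; rewrite -{1}(ger0_norm (ltW a_gt0)).
rewrite -enormZ ler_enorm dotpZl dotpZr mulrA -expr2 => ww.
have : 2 * a * (dotp w v - a * dotp v v) <= 0.
  by have := dotp_amgm a w v; rewrite expr2 in ww *; lra.
by rewrite pmulr_rle0 ?mulr_gt0 // subr_le0.
Qed.

End InnerProduct.

Section Projection.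
Variables (R : realType) (d : nat).
Notation V := 'rV[R]_d.
Variable X : set V.
Hypothesis convX : convex_set X.

Lemma convex_set_comb z p (s : R) : X z -> X p -> 0 <= s -> s <= 1 ->
  X (s *: z + (1 - s) *: p).
Proof.
move=> Xz Xp s_ge0 s_le1.
exact: set_mem (convX (Itv01 s_ge0 s_le1) (mem_set Xz) (mem_set Xp)).
Qed.

Lemma is_proj_dotp_le0 y p z : is_proj X y p -> X z -> dotp (y - p) (z - p) <= 0.
Proof.
move=> [Xp p_min] Xz.
set a := dotp (y - p) (z - p); set b := dotp (z - p) (z - p).
have b_ge0 : 0 <= b by apply: dotpp_ge0.
have two_a_le s : 0 < s -> s <= 1 -> 2 * a <= s * b.
  move=> s_gt0 s_le1.
  have := p_min _ (convex_set_comb Xz Xp (ltW s_gt0) s_le1).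
  have -> : y - (s *: z + (1 - s) *: p) = (y - p) - s *: (z - p).
    by rewrite scalerBl scale1r scalerBr !opprD !opprK !addrA (addrAC y).
  rewrite ler_enorm dotpp_BZ -/a -/b => h.
  by rewrite -(ler_pM2l s_gt0); nra.
(* The choice [s = a / (a + b)] turns [2 a <= s b] into [2 a (a + b) <= a b], absurd for [a > 0]. *)
rewrite leNgt; apply/negP => a_gt0.
have ab_gt0 : 0 < a + b by lra.
have := two_a_le (a / (a + b)) (divr_gt0 a_gt0 ab_gt0).
rewrite ler_pdivrMr // mul1r lerDl b_ge0 => /(_ isT).
rewrite mulrAC ler_pdivlMr //; clearbody a b; nra.
Qed.

Lemma is_proj_gradient_step y g p (gamma : R) :
  X y -> is_proj X (y - gamma *: g) p -> gamma * dotp g (p - y) <= - dotp (y - p) (y - p).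
Proof.
move=> Xy proj_p; have := is_proj_dotp_le0 proj_p Xy.
by rewrite (addrAC y) [dotp (_ - gamma *: g) _]dotpBl dotpZl !dotpBr; lra.
Qed.
End Projection.

Lemma is_derive_quadratic (R : realType) (c k t : R) :
  is_derive t 1 (@id R * cst c + cst k * (@id R * @id R)) (c + k * (t + t)).
Proof.
apply: is_derive_eq.
by rewrite !scaler0 add0r addr0 /cst /= -![_%:A]/(_ * 1) !mulr1.
Qed.

Section Smoothness.
Variables (R : realType) (d : nat).
Notation V := 'rV[R]_d.
Variables (f : V -> R) (grad : V -> V) (U : set V) (L : R).
Hypothesis gradf : forall y, is_gradient f y (grad y).
Hypothesis L_gt0 : 0 < L.
Hypothesis grad_lipschitz :
  forall y z, U y -> U z -> enorm (grad y - grad z) <= L * enorm (y - z).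

Lemma is_derive_line (x v : V) (t : R) :
  is_derive t 1 (fun s : R => f (x + s *: v)) (dotp (grad (x + t *: v)) v).
Proof.
have shiftE : (fun h : R => h^-1 *: (((fun s => f (x + s *: v)) \o shift t) (h *: 1)
                                      - f (x + t *: v)))
    = (fun h : R => h^-1 *: ((f \o shift (x + t *: v)) (h *: v) - f (x + t *: v))).
  by apply: funext => h /=; rewrite -[h%:A]/(h * 1) mulr1 scalerDl addrCA.
have [df dfE] := gradf (x + t *: v).
apply: DeriveDef; first by rewrite /derivable shiftE; apply: diff_derivable.
by rewrite /derive shiftE -/(derive f _ v) deriveE // dfE.
Qed.

Lemma grad_slope_le (x v : V) (t : R) : U x -> U (x + t *: v) -> 0 < t ->
  dotp (grad (x + t *: v) - grad x) v <= L * t * dotp v v.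
Proof.
move=> Ux Uxtv t_gt0; apply: dotp_le_of_enorm_le; first exact: mulr_gt0.
have := grad_lipschitz Uxtv Ux.
by rewrite (addrC x) addrK enormZ gtr0_norm // mulrA.
Qed.

Lemma descent_lemma (x y : V) :
  (forall t, 0 <= t -> t <= 1 -> U (x + t *: (y - x))) ->
  f y <= f x + dotp (grad x) (y - x) + L / 2 * dotp (y - x) (y - x).
Proof.
move=> U_seg; set v := y - x; set c := dotp (grad x) v; set n := dotp v v.
(* [psi t = f (x + t v) - c t - (L/2) n t^2] has nonpositive slope, so [psi 1 <= psi 0]. *)
pose psi : R -> R :=
  (fun s => f (x + s *: v)) - (@id R * cst c + cst (L / 2 * n) * (@id R * @id R)).
pose dpsi t := dotp (grad (x + t *: v)) v - (c + L / 2 * n * (t + t)).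
have psi_der t : is_derive t (1 : R^o) (psi : R^o -> R^o) (dpsi t).
  by apply: is_deriveB; [exact: is_derive_line | exact: is_derive_quadratic].
have psi_cont : {within `[0, 1], continuous psi}.
  by apply: derivable_within_continuous => t _; case: (psi_der t).
have [z] := MVT ltr01 (fun t _ => psi_der t) psi_cont.
rewrite in_itv /= => /andP[z_gt0 z_lt1] psi_mvt.
have Ux : U x by have := U_seg 0 (lexx _) ler01; rewrite scale0r addr0.
have := grad_slope_le Ux (U_seg z (ltW z_gt0) (ltW z_lt1)) z_gt0.
rewrite dotpBl -/v -/c -/n => slope_le.
have psi1 : psi 1 = f y - (c + L / 2 * n).
  change (f (x + 1 *: v) - (1 * c + L / 2 * n * (1 * 1)) = f y - (c + L / 2 * n)).
  by rewrite scale1r /v (addrC x) subrK !mul1r mulr1.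
have psi0 : psi 0 = f x.
  change (f (x + 0 *: v) - (0 * c + L / 2 * n * (0 * 0)) = f x).
  by rewrite scale0r addr0 !mul0r mulr0 addr0 subr0.
have dpsi_le0 : dpsi z <= 0 by rewrite /dpsi; lra.
by move: psi_mvt; rewrite psi1 psi0 subr0 mulr1; lra.
Qed.
End Smoothness.

Lemma ball_step_sufficient_decrease (R : realType) (d : nat) (X U : set 'rV[R]_d)
    (f : 'rV[R]_d -> R) (grad : 'rV[R]_d -> 'rV[R]_d) (L gamma : R)
    (P : 'rV[R]_d -> 'rV[R]_d) (y yn : 'rV[R]_d) :
  convex_set X -> (forall y, is_gradient f y (grad y)) -> X `<=` U -> 0 < L ->
  (forall y z, U y -> U z -> enorm (grad y - grad z) <= L * enorm (y - z)) ->
  (forall y, is_proj X y (P y)) -> 0 < gamma -> gamma <= L^-1 -> X y ->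
  is_argmin_lin (X `&` eball y (gamma * enorm (grad_map P grad gamma y))) (grad y) yn ->
  f yn <= f y - gamma / 2 * enorm (grad_map P grad gamma y) ^+ 2.
Proof.
move=> convX gradf XU L_gt0 lip projP gamma_gt0 gamma_le Xy [[Xyn yn_ball] yn_min].
set g := grad y; set p := P (y - gamma *: g); set u := y - p.
have Gu : grad_map P grad gamma y = gamma^-1 *: u by [].
have radius : gamma * enorm (grad_map P grad gamma y) = enorm u.
  by rewrite Gu enormZ ger0_norm ?invr_ge0 ?ltW // mulrA mulfV ?gt_eqF // mul1r.
have -> : gamma / 2 * enorm (grad_map P grad gamma y) ^+ 2 = gamma^-1 * dotp u u / 2.
  rewrite Gu enormZ exprMn enorm_sqr ger0_norm ?invr_ge0 ?ltW //.
  by field; rewrite gt_eqF.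
rewrite radius in yn_ball yn_min.
have proj_step : dotp g (p - y) <= - (gamma^-1 * dotp u u).
  rewrite -mulrN ler_pdivlMl //.
  by have := is_proj_gradient_step convX Xy (projP (y - gamma *: g)).
have yn_le_p : dotp g yn <= dotp g p.
  apply: yn_min; split; first by case: (projP (y - gamma *: g)).
  by rewrite /eball /= enorm_distC.
have yn_near : L * dotp (yn - y) (yn - y) <= gamma^-1 * dotp u u.
  have L_le : L <= gamma^-1 by rewrite -[L]invrK lef_pV2 ?posrE ?invr_gt0.
  apply: le_trans (ler_wpM2r (dotpp_ge0 u) L_le).
  by rewrite ler_pM2l // -ler_enorm.
have segment_in_U t : 0 <= t -> t <= 1 -> U (y + t *: (yn - y)).
  move=> t_ge0 t_le1; apply: XU.
  rewrite scalerBr addrCA -{1}[y]scale1r -scalerBl.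
  exact: convex_set_comb.
have := descent_lemma gradf L_gt0 lip segment_in_U.
rewrite dotpBr dotpBr in proj_step *.
lra.
Qed.

Lemma exists_le_mean (R : realDomainType) (a : nat -> R) (K : nat) : (0 < K)%N ->
  exists2 k, (k < K)%N & a k *+ K <= \sum_(0 <= i < K) a i.
Proof.
case: K => // K _.
have [k _ k_min] := @arg_minP _ _ 'I_K.+1 ord0 xpredT (fun i => a i) isT.
exists k => //; rewrite big_mkord -[X in _ *+ X]card_ord -sumr_const.
by apply: ler_sum => i _; apply: k_min.
Qed.

Lemma sufficient_decrease_rate (R : realFieldType) (F a : nat -> R) (c Fmin : R) (K : nat) :
  0 < c -> (forall k, F k.+1 <= F k - c * a k) -> (forall k, Fmin <= F k) -> (0 < K)%N ->
  exists2 k, (k < K)%N & a k <= (F 0%N - Fmin) / (c * K%:R).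
Proof.
move=> c_gt0 decr F_ge K_gt0.
have telescope n : c * \sum_(0 <= k < n) a k <= F 0%N - F n.
  elim: n => [|n IHn]; first by rewrite big_geq // mulr0 subrr.
  by rewrite big_nat_recr //= mulrDr; have := decr n; lra.
have [k kK ak_le] := exists_le_mean a K_gt0.
exists k => //; rewrite ler_pdivlMr ?mulr_gt0 ?ltr0n //.
have := telescope K; have := F_ge K.
rewrite -(ler_pM2l c_gt0) -mulr_natr in ak_le; lra.
Qed.

Theorem theorem9 (R : realType) (d : nat) (X U : set 'rV[R]_d)
  (f : 'rV[R]_d -> R) (grad : 'rV[R]_d -> 'rV[R]_d) (L gamma : R)
  (P : 'rV[R]_d -> 'rV[R]_d) (xs : 'rV[R]_d) (x : nat -> 'rV[R]_d) :
  (* X nonempty, closed, convex *)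
  X !=set0 -> closed X -> convex_set X ->
  (* f differentiable with gradient grad *)
  (forall y, is_gradient f y (grad y)) ->
  (* L-smooth on an open set U containing X *)
  open U -> X `<=` U -> 0 < L ->
  (forall y z, U y -> U z -> enorm (grad y - grad z) <= L * enorm (y - z)) ->
  (* f_star = f xs = min over X, attained at xs *)
  X xs -> (forall y, X y -> f xs <= f y) ->
  (* P is the Euclidean projection onto X *)
  (forall y, is_proj X y (P y)) ->
  0 < gamma -> gamma <= L^-1 ->
  (* the iteration *)
  X (x 0%N) ->
  (forall k, is_argmin_lin (X `&` eball (x k) (gamma * enorm (grad_map P grad gamma (x k))))
                           (grad (x k)) (x k.+1)) ->
  (forall k, f (x k.+1) <= f (x k) - gamma / 2 * enorm (grad_map P grad gamma (x k)) ^+ 2)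
  /\ (forall K : nat, (1 <= K)%N ->
        exists2 k : nat, (k < K)%N &
          enorm (grad_map P grad gamma (x k)) ^+ 2 <= 2 * (f (x 0%N) - f xs) / (gamma * K%:R))
  /\ (gamma = L^-1 -> forall K : nat, (1 <= K)%N ->
        exists2 k : nat, (k < K)%N &
          enorm (grad_map P grad (L^-1) (x k)) ^+ 2 <= 2 * L * (f (x 0%N) - f xs) / K%:R).
Proof.
move=> _ _ convX gradf _ XU L_gt0 lip Xxs xs_min projP gamma_gt0 gamma_le X0 x_step.
have Xx k : X (x k) by case: k => // k; case: (x_step k) => [[]].
have decr k := ball_step_sufficient_decrease convX gradf XU L_gt0 lip projP gamma_gt0
  gamma_le (Xx k) (x_step k).
have rate K : (1 <= K)%N -> exists2 k, (k < K)%N &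
    enorm (grad_map P grad gamma (x k)) ^+ 2 <= 2 * (f (x 0%N) - f xs) / (gamma * K%:R).
  move=> K_gt0; have gamma2_gt0 : 0 < gamma / 2 by rewrite divr_gt0.
  have [k kK] := sufficient_decrease_rate (F := f \o x) gamma2_gt0 decr
    (fun k => xs_min _ (Xx k)) K_gt0.
  exists k => //; rewrite [X in _ <= X](_ : _ = (f (x 0%N) - f xs) / (gamma / 2 * K%:R)) //.
  by field; rewrite pnatr_eq0 -lt0n K_gt0 gt_eqF.
split=> //; split=> // gammaE K K_gt0.
have [k kK] := rate K K_gt0; exists k => //.
rewrite -gammaE [X in _ <= X](_ : _ = 2 * (f (x 0%N) - f xs) / (gamma * K%:R)) // gammaE.
by field; rewrite pnatr_eq0 -lt0n K_gt0 gt_eqF.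
Qed.
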